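(* For every $D \in \Omega_n$, $$ \big( \|D\|_{\mathcal{S}_2}^2 + n - 2 \big)^{1/2} \le r_{\mathcal{S}_2}(D) \le \big( \|D\|_{\mathcal{S}_2}^2 + n \big)^{1/2}. $$ Moreover, $\sup_{D\in\Omega_n}\Big| \dfrac{r_{\mathcal{S}_2}(D)^2}{\|D\|_{\mathcal{S}_2}^2 + n} - 1\Big| \to 0$ as $n\to\infty$.
   Context: $\Omega_n$ denotes the set of $n\times n$ doubly stochastic matrices (nonnegative real entries, all row and column sums equal to $1$). $\|\cdot\|_{\mathcal{S}_2}$ is the Frobenius norm $\|A\|_{\mathcal{S}_2}=\big(\sum_{i,j}a_{ij}^2\big)^{1/2}$. For $A\in M_n(\mathbb{R})$, $r_{\mathcal{S}_2}(A) := \max_{B\in\Omega_n}\|A-B\|_{\mathcal{S}_2}$ is the minimal radius of a bounding ball of $\Omega_n$ centered at $A$. *)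

From HB Require Import structures.
From mathcomp Require Import all_boot all_order all_algebra.
From mathcomp Require Import all_classical all_reals all_analysis.
Set Implicit Arguments. Unset Strict Implicit. Unset Printing Implicit Defensive.
Import Order.TTheory GRing.Theory Num.Theory.
Local Open Scope ring_scope.
Local Open Scope classical_set_scope.

Definition doubly_stochastic (R : realType) (n : nat) (B : 'M[R]_n) : Prop :=
  (forall i j, 0 <= B i j) /\
  (forall i, \sum_(j < n) B i j = 1) /\
  (forall j, \sum_(i < n) B i j = 1).

Definition frob (R : realType) (n : nat) (A : 'M[R]_n) : R :=
  Num.sqrt (\sum_(i < n) \sum_(j < n) A i j ^+ 2).

(* r_{S_2}(A) = max_{B in Omega_n} ||A - B||_{S_2}, written as a supremum
   (the max is attained since Omega_n is compact) *)
Definition rS2 (R : realType) (n : nat) (A : 'M[R]_n) : R :=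
  sup [set x : R | exists B : 'M[R]_n, doubly_stochastic B /\ x = frob (A - B)].

Definition ratio_dev (R : realType) (n : nat) : R :=
  sup [set x : R | exists D : 'M[R]_n, doubly_stochastic D /\
         x = `| rS2 D ^+ 2 / (frob D ^+ 2 + n%:R) - 1 |].

From HB Require Import structures.
From mathcomp Require Import all_boot all_order all_algebra.
From mathcomp Require Import all_classical all_reals all_analysis.
From mathcomp Require Import ring lra.
Import Order.TTheory GRing.Theory Num.Theory.
Import numFieldNormedType.Exports.
Local Open Scope ring_scope.
Local Open Scope classical_set_scope.

Set Implicit Arguments.
Unset Strict Implicit.
Unset Printing Implicit Defensive.

(* Expand ||D - B||^2 = ||D||^2 + ||B||^2 - 2<D, B>.  For B doubly stochastic
   the entries lie in [0, 1], so ||B||^2 <= n and <D, B> >= 0: this is the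
   upper bound.  The n cyclic shift matrices P_k satisfy ||P_k||^2 = n and
   sum_k <D, P_k> = sum_(i,j) D i j = n, so <D, P_k> <= 1 for some k, whence
   ||D - P_k||^2 >= ||D||^2 + n - 2: this is the lower bound.  Hence r(D)^2 is
   within 2 of ||D||^2 + n >= n, and the relative deviation is at most 2/n. *)

Section FrobeniusInnerProduct.
Variable R : realDomainType.

Definition frob_sq n (A : 'M[R]_n) : R := \sum_i \sum_j A i j ^+ 2.

Definition frob_dot n (A B : 'M[R]_n) : R := \sum_i \sum_j A i j * B i j.

Lemma frob_sq_ge0 n (A : 'M[R]_n) : 0 <= frob_sq A.
Proof. by apply: sumr_ge0 => i _; apply: sumr_ge0 => j _; exact: sqr_ge0. Qed.

Lemma frob_sqB n (A B : 'M[R]_n) :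
  frob_sq (A - B) = frob_sq A + frob_sq B - 2 * frob_dot A B.
Proof.
rewrite /frob_sq /frob_dot mulr_sumr -sumrN -!big_split /=; apply: eq_bigr => i _.
rewrite mulr_sumr -sumrN -!big_split /=; apply: eq_bigr => j _.
by rewrite !mxE; ring.
Qed.

Lemma frob_dot_ge0 n (A B : 'M[R]_n) :
  (forall i j, 0 <= A i j) -> (forall i j, 0 <= B i j) -> 0 <= frob_dot A B.
Proof.
move=> A0 B0; apply: sumr_ge0 => i _; apply: sumr_ge0 => j _.
exact: mulr_ge0.
Qed.

Lemma exists_le_mean m (F : 'I_m.+1 -> R) (c : R) :
  \sum_k F k <= m.+1%:R * c -> exists k, F k <= c.
Proof.
move=> sumF; apply: contrapT => /forallNP gtF.
have : \sum_(k < m.+1) c < \sum_k F k.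
  apply: ltr_sum; first by apply/hasP; exists ord0; rewrite ?mem_index_enum.
  by move=> k _; rewrite ltNge; apply/negP/gtF.
by rewrite sumr_const card_ord -mulr_natl ltNge sumF.
Qed.

Definition shift_mx m (k : 'I_m.+1) : 'M[R]_m.+1 :=
  \matrix_(i, j) (j == i + k)%:R.

Lemma frob_dot_shift_mx m (D : 'M[R]_m.+1) k :
  frob_dot D (shift_mx k) = \sum_i D i (i + k).
Proof.
apply: eq_bigr => i _; rewrite (bigD1 (i + k)) //= big1 ?mxE ?eqxx ?mulr1 ?addr0 //.
by move=> j /negbTE ji; rewrite mxE ji mulr0.
Qed.

Lemma sum_frob_dot_shift_mx m (D : 'M[R]_m.+1) :
  \sum_k frob_dot D (shift_mx k) = \sum_i \sum_j D i j.
Proof.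
under eq_bigr => k _ do rewrite frob_dot_shift_mx.
rewrite exchange_big /=; apply: eq_bigr => i _.
by rewrite [RHS](reindex_inj (addrI i)).
Qed.

End FrobeniusInnerProduct.

Lemma le_sqr_of_sqrtr_le (R : rcfType) (a x : R) : Num.sqrt a <= x -> a <= x ^+ 2.
Proof.
move=> le_x; have x0 : 0 <= x := le_trans (sqrtr_ge0 a) le_x.
have [a0|a_lt0] := leP 0 a; last exact: ltW (lt_le_trans a_lt0 (sqr_ge0 x)).
by rewrite -(sqr_sqrtr a0) ler_sqr // nnegrE sqrtr_ge0.
Qed.

Lemma sqr_le_of_le_sqrtr (R : rcfType) (a x : R) :
  0 <= a -> 0 <= x -> x <= Num.sqrt a -> x ^+ 2 <= a.
Proof. by move=> a0 x0 le_x; rewrite -(sqr_sqrtr a0) ler_sqr // nnegrE sqrtr_ge0. Qed.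

Lemma norm_divr_sub1_le (R : realFieldType) (x c N : R) :
  0 < N <= c -> c - 2 <= x <= c -> `|x / c - 1| <= 2 / N.
Proof.
move=> /andP[N0 Nc] /andP[lo hi]; have c0 : 0 < c := lt_le_trans N0 Nc.
have -> : x / c - 1 = (x - c) / c by rewrite mulrBl divff ?gt_eqF.
have ic0 : 0 < c^-1 by rewrite invr_gt0.
rewrite normrM (gtr0_norm ic0).
apply: ler_pM; [exact: normr_ge0 | exact: ltW | |].
- by rewrite ler_norml; apply/andP; split; lra.
- by rewrite lef_pV2.
Qed.

Section DoublyStochastic.
Variable R : realType.

Lemma frob_sqr n (A : 'M[R]_n) : frob A ^+ 2 = frob_sq A.
Proof. by rewrite sqr_sqrtr // frob_sq_ge0. Qed.

Lemma dstoch_le1 n (B : 'M[R]_n) : doubly_stochastic B -> forall i j, B i j <= 1.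
Proof.
move=> [B0 [rowB _]] i j; rewrite -(rowB i) (bigD1 j) //= lerDl.
by apply: sumr_ge0.
Qed.

Lemma dstoch_mass n (B : 'M[R]_n) : doubly_stochastic B ->
  \sum_i \sum_j B i j = n%:R.
Proof.
move=> [_ [rowB _]]; under eq_bigr => i _ do rewrite rowB.
by rewrite sumr_const card_ord.
Qed.

Lemma frob_sq_dstoch_le n (B : 'M[R]_n) : doubly_stochastic B -> frob_sq B <= n%:R.
Proof.
move=> dsB; rewrite -(dstoch_mass dsB); apply: ler_sum => i _; apply: ler_sum => j _.
have B0 := dsB.1 i j; have B1 := dstoch_le1 dsB i j.
by rewrite expr2 ler_piMr.
Qed.

Lemma shift_mx_dstoch m (k : 'I_m.+1) : doubly_stochastic (shift_mx R k).
Proof.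
split; first by move=> i j; rewrite mxE ler0n.
split=> [i|j].
- rewrite (bigD1 (i + k)) //= big1 ?mxE ?eqxx ?addr0 // => j /negbTE ji.
  by rewrite mxE ji.
- rewrite (bigD1 (j - k)) //= big1 ?mxE ?subrK ?eqxx ?addr0 // => i ij.
  rewrite mxE; case: eqP => // ji.
  by move: ij; rewrite ji addrK eqxx.
Qed.

Lemma frob_sq_shift_mx m (k : 'I_m.+1) : frob_sq (shift_mx R k) = m.+1%:R.
Proof.
rewrite -(dstoch_mass (shift_mx_dstoch k)).
apply: eq_bigr => i _; apply: eq_bigr => j _.
by rewrite mxE; case: eqP; rewrite ?expr1n ?expr0n.
Qed.

Lemma frob_sq_sub_dstoch_le n (D B : 'M[R]_n) :
  doubly_stochastic D -> doubly_stochastic B ->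
  frob_sq (D - B) <= frob_sq D + n%:R.
Proof.
move=> dsD dsB; rewrite frob_sqB.
have := frob_sq_dstoch_le dsB; have := frob_dot_ge0 dsD.1 dsB.1; lra.
Qed.

Lemma exists_dstoch_far n (D : 'M[R]_n) : doubly_stochastic D ->
  exists2 B, doubly_stochastic B & frob_sq D + n%:R - 2 <= frob_sq (D - B).
Proof.
case: n D => [|m] D dsD.
  exists D => //; rewrite subrr /frob_sq !big_ord0; lra.
have [|k le1] := @exists_le_mean _ m (fun k => frob_dot D (shift_mx R k)) 1.
  by rewrite sum_frob_dot_shift_mx (dstoch_mass dsD) mulr1.
exists (shift_mx R k); first exact: shift_mx_dstoch.
by rewrite frob_sqB frob_sq_shift_mx; lra.
Qed.

Lemma rS2_bounds n (D : 'M[R]_n) : doubly_stochastic D ->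
  Num.sqrt (frob D ^+ 2 + n%:R - 2) <= rS2 D /\
  rS2 D <= Num.sqrt (frob D ^+ 2 + n%:R).
Proof.
move=> dsD; rewrite frob_sqr.
have ub : ubound [set x | exists B, doubly_stochastic B /\ x = frob (D - B)]
                 (Num.sqrt (frob_sq D + n%:R)).
  by move=> _ [B [dsB ->]]; apply: ler_wsqrtr; exact: frob_sq_sub_dstoch_le.
have ne : [set x | exists B, doubly_stochastic B /\ x = frob (D - B)] !=set0.
  by exists (frob (D - D)), D.
split; last exact: ge_sup.
have [B dsB far] := exists_dstoch_far dsD.
apply: le_trans (ler_wsqrtr far) _.
by apply: sup_upper_bound; [split; [|exists (Num.sqrt (frob_sq D + n%:R))] | exists B].
Qed.

Lemma rS2_sqr_bounds n (D : 'M[R]_n) : doubly_stochastic D ->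
  frob D ^+ 2 + n%:R - 2 <= rS2 D ^+ 2 <= frob D ^+ 2 + n%:R.
Proof.
move=> dsD; have [lo hi] := rS2_bounds dsD.
rewrite le_sqr_of_sqrtr_le //= sqr_le_of_le_sqrtr //.
- by rewrite addr_ge0 // sqr_ge0.
- exact: le_trans (sqrtr_ge0 _) lo.
Qed.

Lemma ratio_dev_le m : 0 <= ratio_dev R m.+1 <= 2 / m.+1%:R.
Proof.
rewrite /ratio_dev; set S := (X in sup X).
have ub : ubound S (2 / m.+1%:R).
  move=> _ [D [dsD ->]]; apply: norm_divr_sub1_le (rS2_sqr_bounds dsD).
  by rewrite ltr0Sn lerDr sqr_ge0.
have [x Sx] : S !=set0.
  by eexists; exists (shift_mx R ord0); split; first exact: shift_mx_dstoch.
have supS : has_sup S by split; [exists x | exists (2 / m.+1%:R)].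
apply/andP; split; last by apply: ge_sup => //; exists x.
apply: le_trans (sup_upper_bound supS Sx).
by case: Sx => D [_ ->].
Qed.

Lemma ratio_dev_cvg0 : ratio_dev R n @[n --> \oo] --> (0 : R).
Proof.
rewrite -cvg_shiftS.
have lim2h : (fun n => 2 * harmonic n) @ \oo --> (0 : R).
  by rewrite -(mulr0 (2 : R)); apply: cvgM; [exact: cvg_cst | exact: cvg_harmonic].
apply: squeeze_cvgr (cvg_cst 0) lim2h; apply: nearW => n /=.
exact: ratio_dev_le.
Qed.

End DoublyStochastic.

Theorem mainTheorem4 (R : realType) :
  (forall (n : nat) (D : 'M[R]_n), doubly_stochastic D ->
     Num.sqrt (frob D ^+ 2 + n%:R - 2) <= rS2 D /\
     rS2 D <= Num.sqrt (frob D ^+ 2 + n%:R)) /\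
  (ratio_dev R n @[n --> \oo] --> (0 : R)).
Proof. by split; [exact: rS2_bounds | exact: ratio_dev_cvg0]. Qed.
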